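(* Consider the one-dimensional elliptic optimal control problem with random inputs $\xi=(\xi_1,\xi_2,\xi_3,\xi_4)\in[-1,1]^4$ described in the context, discretized in space by $\hat N$ nodal finite element basis functions, and consider the linear system solved in the final iteration of the approximate Newton method, namely, for every $\xi$, $$ \begin{bmatrix} \mathbf{M}_y & 0 & \mathbf{A}(\xi_1) \\ 0 & \mathbf{M}_u & -\mathbf{B}^\top \\ \mathbf{A}(\xi_1) & -\mathbf{B} & 0 \end{bmatrix} \begin{bmatrix} \mathbf{y}(\xi) \\ \mathbf{u}(\xi) \\ \boldsymbol\lambda(\xi) \end{bmatrix} = \begin{bmatrix} \mathbf{M}_y\mathbf{y}_d \\ 0 \\ -\mathbf{g}(\xi_2) - \mathbf{b}_3(\xi_3) - \mathbf{b}_4(\xi_4) \end{bmatrix}, $$ with $\mathbf{y}(\xi),\mathbf{u}(\xi),\boldsymbol\lambda(\xi)\in\mathbb{R}^{\hat N}$. Then the solution admits an exact (block) tensor-train decomposition of TT ranks not greater than $7$: there exist a matrix-valued function $Z^{(1)}(\xi_1)\in\mathbb{R}^{3\hat N\times r_1}$ and matrix-valued functions $z^{(k)}(\xi_k)\in\mathbb{R}^{r_{k-1}\times r_k}$, $k=2,3,4$, with $r_4=1$ and $r_1,r_2,r_3\le 7$, such that for all $\xi$ $$ \begin{bmatrix} \mathbf{y}(\xi) \\ \mathbf{u}(\xi) \\ \boldsymbol\lambda(\xi) \end{bmatrix} = Z^{(1)}(\xi_1)\, z^{(2)}(\xi_2)\, z^{(3)}(\xi_3)\, z^{(4)}(\xi_4).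 $$
   Context: The underlying problem: minimize $\mathbb{E}\big[\tfrac12\|y(\cdot,\xi)-y_d\|^2_{L^2(D)} + \tfrac{\alpha}{2}\|u(\cdot,\xi)\|^2_{L^2(D)}\big] + \beta\int_D\big(\int_\Xi u(x,\xi)^2\rho(\xi)d\xi+\varepsilon^2\big)^{1/2}dx$ subject to $\nu(\xi)\Delta y(x,\xi) = g(x,\xi)+u(x,\xi)$ on $D=(0,1)$, with $\nu(\xi)=10^{\xi_1-2}$, $g(x,\xi)=\xi_2/100$, boundary conditions $y|_{x=0}=-1-\xi_3/1000$, $y|_{x=1}=-(2+\xi_4)/1000$, $\xi\sim\mathcal{U}(-1,1)^4$, $y_d(x)=-\sin(50x/\pi)$, $\alpha,\beta\ge0$, $\varepsilon>0$. In the discretized linear system: $\mathbf{M}_y\in\mathbb{R}^{\hat N\times\hat N}$ is the (symmetric positive definite, $\xi$-independent) state mass matrix; $\mathbf{A}(\xi_1)$ is the symmetric invertible stiffness matrix of $\nu(\xi_1)\Delta$ (depending only on $\xi_1$); $\mathbf{B}$ is the $\xi$-independent actuator matrix; $\mathbf{y}_d$ is the $\xi$-independent discretized desired state; $\mathbf{g}(\xi_2)$ is the discretized source depending only on $\xi_2$; $\mathbf{b}_3(\xi_3)$ and $\mathbf{b}_4(\xi_4)$ are the right-hand-side contributions of the left and right boundary conditions, depending only on $\xi_3$ and $\xi_4$ respectively; $\mathbf{M}_u$ is the control block of the approximate Hessian, $\mathbf{M}_u=\alpha\mathbf{M} + \mathrm{diag}_i\big(\beta\hat w_i/\sqrt{\sum_{j}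 w_j (u^{\mathrm{prev}}_{i,j})^2+\varepsilon^2}\big)$ with $\mathbf{M}$ the control mass matrix, $\hat w_i>0$ spatial quadrature weights, $w_j>0$ random-variable quadrature weights and $u^{\mathrm{prev}}$ the previous iterate; it is symmetric positive definite and independent of $\xi$. TT ranks refer to the sizes $r_k$ of the inner summation indices in the factorization, with the spatial index carried by the first factor. *)

From HB Require Import structures.
From mathcomp Require Import all_boot all_order all_algebra.
Set Implicit Arguments. Unset Strict Implicit. Unset Printing Implicit Defensive.
Import Order.TTheory GRing.Theory Num.Theory.
Local Open Scope ring_scope.

Definition spd (R : realFieldType) (n : nat) (M : 'M[R]_n) : Prop :=
  M^T = M /\ forall v : 'cV[R]_n, v != 0 -> 0 < (v^T *m M *m v) 0 0.

Definition sym_inv (R : realFieldType) (n : nat) (M : 'M[R]_n) : Prop :=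
  M^T = M /\ M \in unitmx.

(* the 3x3 block KKT matrix
   [ My  0   A  ]
   [ 0   Mu -B^T]
   [ A  -B   0  ]                                                  *)
Definition kkt_matrix (R : realFieldType) (N : nat)
  (My Mu A B : 'M[R]_N) : 'M[R]_(N + N + N) :=
  block_mx (block_mx My 0 0 Mu) (col_mx A (- B^T)) (row_mx A (- B)) 0.

Definition kkt_rhs (R : realFieldType) (N : nat)
  (My : 'M[R]_N) (yd g b3 b4 : 'cV[R]_N) : 'cV[R]_(N + N + N) :=
  col_mx (col_mx (My *m yd) 0) (- g - b3 - b4).

(* discretized data: the FE discretization is linear in the data, so
   g(xi2) = (xi2/100) g0, b3(xi3) = (-1 - xi3/1000) c3,
   b4(xi4) = (-(2 + xi4)/1000) c4 for fixed vectors g0, c3, c4. *)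
Definition g_vec (R : realFieldType) (N : nat) (g0 : 'cV[R]_N) (x2 : R) : 'cV[R]_N :=
  (x2 / 100%:R) *: g0.
Definition b3_vec (R : realFieldType) (N : nat) (c3 : 'cV[R]_N) (x3 : R) : 'cV[R]_N :=
  (- 1 - x3 / 1000%:R) *: c3.
Definition b4_vec (R : realFieldType) (N : nat) (c4 : 'cV[R]_N) (x4 : R) : 'cV[R]_N :=
  (- (2%:R + x4) / 1000%:R) *: c4.

Definition in_box (R : realFieldType) (x : R) : Prop := -1 <= x <= 1.

From HB Require Import structures.
From mathcomp Require Import all_boot all_order all_algebra ring lra.
Import Order.TTheory GRing.Theory Num.Theory.
Local Open Scope ring_scope.

(* For a kernel vector (a; b; c) of the KKT matrix, pairing the first block
   row with [a] and using the symmetry of [A] gives [a^T My a + b^T Mu b = 0],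
   so positive definiteness and the
   invertibility of [A] make the KKT matrix injective.  The right-hand side is
   affine in [x2], [x3], [x4] separately, hence so is the solution for fixed
   [x1]: it equals [X0 + x2 D2 + x3 D3 + x4 D4], with [X0] the solution at
   [(x2, x3, x4) = 0] and [Dk] the increment towards the k-th unit vector.
   Such a sum is a tensor train of rank 4 with diagonal inner cores. *)

Section PositiveDefinite.

Context {R : realFieldType} {n : nat} {M : 'M[R]_n}.
Hypothesis M_spd : spd M.

Lemma spd_form_ge0 (v : 'cV[R]_n) : 0 <= (v^T *m M *m v) 0 0.
Proof.
have [->|v_neq0] := eqVneq v 0; first by rewrite trmx0 !mul0mx mxE.
by rewrite ltW //; apply: M_spd.2.
Qed.

Lemma spd_form_eq0 (v : 'cV[R]_n) : (v^T *m M *m v) 0 0 = 0 -> v = 0.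
Proof.
move=> form0; have [//|v_neq0] := eqVneq v 0.
by have := M_spd.2 v v_neq0; rewrite form0 ltxx.
Qed.

End PositiveDefinite.

Section KKTMatrix.

Context {R : realFieldType} {N : nat} {My Mu A B : 'M[R]_N}.

Lemma kkt_matrix_mul (a b c : 'cV[R]_N) :
  kkt_matrix My Mu A B *m col_mx (col_mx a b) c
  = col_mx (col_mx (My *m a + A *m c) (Mu *m b - B^T *m c)) (A *m a - B *m b).
Proof.
rewrite /kkt_matrix !mul_block_col !mul_col_mx !mul_row_col !mul0mx.
by rewrite !addr0 !add0r add_col_mx !mulNmx.
Qed.

Hypotheses (My_spd : spd My) (Mu_spd : spd Mu) (A_sym_inv : sym_inv A).

Lemma kkt_matrix_ker (v : 'cV[R]_(N + N + N)) :
  kkt_matrix My Mu A B *m v = 0 -> v = 0.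
Proof.
have [A_sym A_unit] := A_sym_inv.
rewrite -(vsubmxK v) -(vsubmxK (usubmx v)).
set a := usubmx (usubmx v); set b := dsubmx (usubmx v); set c := dsubmx v.
rewrite kkt_matrix_mul -!col_mx0.
move=> /eq_col_mx [/eq_col_mx [Ea /subr0_eq Eb] /subr0_eq Ec].
have energy0 : a^T *m My *m a + b^T *m Mu *m b = 0.
  have : a^T *m (My *m a + A *m c) = 0 by rewrite Ea mulmx0.
  have aA : a^T *m A = b^T *m B^T by rewrite -{1}A_sym -trmx_mul Ec trmx_mul.
  by rewrite mulmxDr !mulmxA aA -[b^T *m B^T *m c]mulmxA -Eb mulmxA.
move/matrixP/(_ 0 0)/eqP: energy0.
rewrite mxE [X in _ == X]mxE paddr_eq0 ?spd_form_ge0 //.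
move=> /andP[/eqP/(spd_form_eq0 My_spd) a0 /eqP/(spd_form_eq0 Mu_spd) ->].
suff -> : c = 0 by rewrite a0 !col_mx0.
have Ac0 : A *m c = 0 by rewrite -Ea a0 mulmx0 add0r.
by rewrite -(mulKmx A_unit c) Ac0 mulmx0.
Qed.

Lemma kkt_matrix_inj (v w : 'cV[R]_(N + N + N)) :
  kkt_matrix My Mu A B *m v = kkt_matrix My Mu A B *m w -> v = w.
Proof.
move=> /eqP; rewrite -subr_eq0 -mulmxBr => /eqP/kkt_matrix_ker.
exact: subr0_eq.
Qed.

End KKTMatrix.

Lemma kkt_rhs_affine (R : realFieldType) (N : nat) (My : 'M[R]_N)
    (yd g0 c3 c4 : 'cV[R]_N) (x2 x3 x4 : R) :
  let b s t w := kkt_rhs My yd (g_vec g0 s) (b3_vec c3 t) (b4_vec c4 w) in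
  b x2 x3 x4 = b 0 0 0 + x2 *: (b 1 0 0 - b 0 0 0) + x3 *: (b 0 1 0 - b 0 0 0)
               + x4 *: (b 0 0 1 - b 0 0 0).
Proof.
apply/matrixP => i j; rewrite /kkt_rhs /g_vec /b3_vec /b4_vec !mxE.
case: (split i) => k; rewrite !mxE; last by ring.
by case: (split k) => l; rewrite !mxE; ring.
Qed.

Section RankFourTensorTrain.

Context {R : realFieldType}.

Definition diag4 (a b c d : R) : 'M[R]_(1 + (1 + (1 + 1))) :=
  block_mx a%:M 0 0 (block_mx b%:M 0 0 (block_mx c%:M 0 0 d%:M)).

Definition col4 (a b c d : R) : 'cV[R]_(1 + (1 + (1 + 1))) :=
  col_mx a%:M (col_mx b%:M (col_mx c%:M d%:M)).

Definition row4 {m : nat} (P0 P1 P2 P3 : 'cV[R]_m) : 'M[R]_(m, 1 + (1 + (1 + 1))) :=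
  row_mx P0 (row_mx P1 (row_mx P2 P3)).

Lemma diag4_mul_col4 (a b c d p q r s : R) :
  diag4 a b c d *m col4 p q r s = col4 (a * p) (b * q) (c * r) (d * s).
Proof. by rewrite /diag4 !mul_block_col !mul0mx !addr0 !add0r -!scalar_mxM. Qed.

Lemma row4_mul_col4 (m : nat) (P0 P1 P2 P3 : 'cV[R]_m) (a b c d : R) :
  row4 P0 P1 P2 P3 *m col4 a b c d = a *: P0 + b *: P1 + c *: P2 + d *: P3.
Proof. by rewrite !mul_row_col !mul_mx_scalar !addrA. Qed.

Lemma tt_rank4_affine (m : nat) (P0 P2 P3 P4 : 'cV[R]_m) (x2 x3 x4 : R) :
  row4 P0 P2 P3 P4 *m diag4 1 x2 1 1 *m diag4 1 1 x3 1 *m col4 1 1 1 x4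
  = P0 + x2 *: P2 + x3 *: P3 + x4 *: P4.
Proof. by rewrite -!mulmxA !diag4_mul_col4 row4_mul_col4 !mulr1 !mul1r scale1r. Qed.

End RankFourTensorTrain.

Lemma in_box0 (R : realFieldType) : in_box (0 : R).
Proof. by rewrite /in_box; apply/andP; split; lra. Qed.

Lemma in_box1 (R : realFieldType) : in_box (1 : R).
Proof. by rewrite /in_box; apply/andP; split; lra. Qed.

Theorem mainTheorem1 (R : realFieldType) (N : nat)
  (My Mu B : 'M[R]_N) (A : R -> 'M[R]_N) (yd g0 c3 c4 : 'cV[R]_N)
  (y u lam : R -> R -> R -> R -> 'cV[R]_N) :
  spd My -> spd Mu -> (forall x1, sym_inv (A x1)) ->
  (forall x1 x2 x3 x4, in_box x1 -> in_box x2 -> in_box x3 -> in_box x4 ->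
     kkt_matrix My Mu (A x1) B *m col_mx (col_mx (y x1 x2 x3 x4) (u x1 x2 x3 x4))
                                        (lam x1 x2 x3 x4)
     = kkt_rhs My yd (g_vec g0 x2) (b3_vec c3 x3) (b4_vec c4 x4)) ->
  exists (r1 r2 r3 : nat),
    [/\ (r1 <= 7)%N, (r2 <= 7)%N, (r3 <= 7)%N &
    exists (Z1 : R -> 'M[R]_(N + N + N, r1)) (z2 : R -> 'M[R]_(r1, r2))
           (z3 : R -> 'M[R]_(r2, r3)) (z4 : R -> 'M[R]_(r3, 1)),
      forall x1 x2 x3 x4, in_box x1 -> in_box x2 -> in_box x3 -> in_box x4 ->
        col_mx (col_mx (y x1 x2 x3 x4) (u x1 x2 x3 x4)) (lam x1 x2 x3 x4)
        = Z1 x1 *m z2 x2 *m z3 x3 *m z4 x4].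
Proof.
move=> My_spd Mu_spd A_sym_inv solves.
pose X x1 x2 x3 x4 := col_mx (col_mx (y x1 x2 x3 x4) (u x1 x2 x3 x4)) (lam x1 x2 x3 x4).
pose D x1 x2 x3 x4 := X x1 x2 x3 x4 - X x1 0 0 0.
exists 4%N, 4%N, 4%N; split => //.
exists (fun x1 => row4 (X x1 0 0 0) (D x1 1 0 0) (D x1 0 1 0) (D x1 0 0 1)).
exists (fun x2 => diag4 1 x2 1 1), (fun x3 => diag4 1 1 x3 1).
exists (fun x4 => col4 1 1 1 x4).
move=> x1 x2 x3 x4 box_x1 box_x2 box_x3 box_x4; rewrite tt_rank4_affine.
apply: (kkt_matrix_inj (B := B) My_spd Mu_spd (A_sym_inv x1)).
have [box0 box1] := (in_box0 R, in_box1 R).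
rewrite !mulmxDr -!scalemxAr !mulmxBr /D /X !solves //.
exact: kkt_rhs_affine.
Qed.
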